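(* Let $G$ be a graph with $n$ vertices. If $\mathrm{Deg}\,H(G,x)\ge n$, then $G$ contains a triangle (i.e. its girth is $3$). Furthermore, if $G$ is triangle-free and $\mathrm{Deg}\,H(G,x)=n-1$, then $G$ is connected and has diameter at most $3$.
   Context: All graphs are finite, simple and have no isolated vertices; $d_u$ is the degree of $u$. The harmonic polynomial is $H(G,x)=\sum_{uv\in E(G)}x^{d_u+d_v-1}$, and $\mathrm{Deg}\,p(x)$ denotes the degree of a polynomial $p$. The girth is the minimum length of a cycle. *)

From mathcomp Require Import all_boot all_order all_algebra.
Set Implicit Arguments. Unset Strict Implicit. Unset Printing Implicit Defensive.
Import GRing.Theory.

Definition simple_graph (T : finType) (e : rel T) : Prop :=
  symmetric e /\ irreflexive e.

Definition no_isolated (T : finType) (e : rel T) : Prop :=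
  forall u : T, exists v : T, e u v.

Definition gdeg (T : finType) (e : rel T) (u : T) : nat := #|[set v | e u v]|.

Definition gedges (T : finType) (e : rel T) : {set {set T}} :=
  [set E : {set T} | [exists u, exists v, e u v && (E == [set u; v])]].

Definition harmonic_poly (T : finType) (e : rel T) : {poly int} :=
  (\sum_(E in gedges e) 'X^((\sum_(x in E) gdeg e x).-1))%R.

Definition Deg (R : nzRingType) (p : {poly R}) : nat := (size p).-1.

Definition has_triangle (T : finType) (e : rel T) : Prop :=
  exists u v w : T, [&& e u v, e v w & e w u].

Definition gconnected (T : finType) (e : rel T) : Prop :=
  forall u v : T, connect e u v.

Definition diam_le (T : finType) (e : rel T) (k : nat) : Prop :=
  forall u v : T, exists p : seq T,
    [&& path e u p, last u p == v & size p <= k].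

From mathcomp Require Import all_boot all_order all_algebra zify.
Import GRing.Theory Num.Theory.
Set Implicit Arguments.
Unset Strict Implicit.
Unset Printing Implicit Defensive.

(* The top monomial of H(G,x) comes from an edge uv with d_u + d_v maximal, so
   Deg H(G,x) = d_u + d_v - 1.  Without triangles the neighbourhoods of u and v
   are disjoint, hence d_u + d_v <= n, which gives the first claim.  If moreover
   d_u + d_v = n, every vertex is adjacent to u or v, and any two vertices are
   joined through the edge uv by a walk of length at most 3. *)

Section HarmonicDegree.
Variables (T : finType) (e : rel T).
Hypothesis e_simple : simple_graph e.

Lemma edge_neq u v : e u v -> u != v.
Proof. by move=> euv; apply: contraTneq euv => ->; case: e_simple => _ ->. Qed.

Lemma sum_gdeg_edge u v : e u v ->
  \sum_(x in [set u; v]) gdeg e x = gdeg e u + gdeg e v.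
Proof. by move=> /edge_neq uv; rewrite big_setU1 /= ?big_set1 // in_set1. Qed.

Lemma edge_in_gedges u v : e u v -> [set u; v] \in gedges e.
Proof.
by move=> euv; rewrite inE; apply/existsP; exists u; apply/existsP; exists v;
  rewrite euv eqxx.
Qed.

Lemma coef_harmonic_poly k :
  ((harmonic_poly e)`_k)%R =
  (\sum_(E in gedges e) ((k == (\sum_(x in E) gdeg e x).-1)%:R : int))%R.
Proof. by rewrite /harmonic_poly coef_sum; apply: eq_bigr => E _; rewrite coefXn. Qed.

(* All coefficients are counts of edges, so none of the monomials cancel. *)
Lemma harmonic_poly_neq0 u v : e u v -> harmonic_poly e != 0%R.
Proof.
move=> euv; apply/eqP=> H0.
have := coef_harmonic_poly (gdeg e u + gdeg e v).-1.
rewrite H0 coef0 (bigD1 _ (edge_in_gedges euv)) /= sum_gdeg_edge // eqxx => /eqP.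
by rewrite eq_sym paddr_eq0 ?oner_eq0 // sumr_ge0.
Qed.

Lemma Deg_harmonic_poly_edge u0 v0 : e u0 v0 ->
  exists u v, e u v /\ Deg (harmonic_poly e) = (gdeg e u + gdeg e v).-1.
Proof.
set p := harmonic_poly e => e0.
have : (p`_(Deg p) != 0)%R.
  by rewrite /Deg -lead_coefE lead_coef_eq0 (harmonic_poly_neq0 e0).
rewrite coef_harmonic_poly => lead_neq0.
have : [exists E in gedges e, Deg p == (\sum_(x in E) gdeg e x).-1].
  apply: contraNT lead_neq0 => /existsPn noE; apply/eqP; rewrite big1 // => E EE.
  by have := noE E; rewrite EE /= => /negbTE ->.
case/existsP => E /andP [+ /eqP ->].
rewrite inE => /existsP [u /existsP [v /andP [euv /eqP ->]]].
by exists u, v; rewrite sum_gdeg_edge.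
Qed.

Lemma common_neighbour_triangle u v w : e u v -> e u w -> e v w -> has_triangle e.
Proof. by move=> euv euw evw; exists u, v, w; rewrite euv evw (proj1 e_simple w u) euw. Qed.

Lemma neighbours_disjoint u v : ~ has_triangle e -> e u v ->
  [set w | e u w] :&: [set w | e v w] = set0.
Proof.
move=> notri euv; apply/setP => w; rewrite !inE; apply/negP => /andP [euw evw].
exact/notri/(common_neighbour_triangle euv euw evw).
Qed.

Lemma gdeg_edge_gt_triangle u v : e u v ->
  #|T| < gdeg e u + gdeg e v -> has_triangle e.
Proof.
move=> euv; rewrite /gdeg -cardsUI => sum_gt.
have : 0 < #|[set w | e u w] :&: [set w | e v w]|.
  have : #|[set w | e u w] :|: [set w | e v w]| <= #|T| := max_card _.
  by move: sum_gt; lia.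
case/card_gt0P => w; rewrite !inE => /andP [euw evw].
exact: common_neighbour_triangle euv euw evw.
Qed.

Lemma edge_dominating u v : ~ has_triangle e -> e u v ->
  gdeg e u + gdeg e v = #|T| -> forall w, e u w || e v w.
Proof.
move=> notri euv sum_n w.
have : [set x | e u x] :|: [set x | e v x] = setT.
  apply/eqP; rewrite eqEcard subsetT cardsT /= -sum_n /gdeg -cardsUI.
  by rewrite neighbours_disjoint // cards0 addn0.
by move/setP/(_ w); rewrite !inE.
Qed.

Lemma diam_le3_dominating_edge u v : e u v ->
  (forall w, e u w || e v w) -> diam_le e 3.
Proof.
have [sym _] := e_simple; move=> euv dom x y.
have evu : e v u by rewrite sym.
case/orP: (dom x) => ex; case/orP: (dom y) => ey.
- by exists [:: u; y]; rewrite /= ey (sym x u) ex eqxx.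
- by exists [:: u; v; y]; rewrite /= ey euv (sym x u) ex eqxx.
- by exists [:: v; u; y]; rewrite /= ey evu (sym x v) ex eqxx.
- by exists [:: v; y]; rewrite /= ey (sym x v) ex eqxx.
Qed.

End HarmonicDegree.

Lemma diam_le_gconnected (T : finType) (e : rel T) k :
  diam_le e k -> gconnected e.
Proof.
move=> diam x y; have [p /and3P [pp /eqP lp _]] := diam x y.
by apply/connectP; exists p.
Qed.

Theorem theorem11 (T : finType) (e : rel T) :
  simple_graph e -> no_isolated e -> 0 < #|T| ->
  (#|T| <= Deg (harmonic_poly e) -> has_triangle e) /\
  (~ has_triangle e -> Deg (harmonic_poly e) = #|T|.-1 ->
     gconnected e /\ diam_le e 3).
Proof.
move=> e_simple noiso T_gt0.
have [x0 _] := card_gt0P T_gt0; have [y0 e0] := noiso x0.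
have [u [v [euv ->]]] := Deg_harmonic_poly_edge e_simple e0.
split=> [deg_ge | notri deg_eq].
  by apply: (gdeg_edge_gt_triangle e_simple euv); lia.
have du_gt0 : 0 < gdeg e u by apply/card_gt0P; exists v; rewrite inE.
have sum_n : gdeg e u + gdeg e v = #|T| by move: deg_eq; lia.
have diam3 := diam_le3_dominating_edge e_simple euv
  (edge_dominating e_simple notri euv sum_n).
by split=> //; apply: diam_le_gconnected diam3.
Qed.
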